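(* Let $(X,\tau)$ be a Fréchet topological space in which every sequence has at most one limit (in particular, any Fréchet Hausdorff space). Then $(X,\tau)$ is an accessibility space.
   Context: A topological space is Fréchet if whenever $x\in\mathrm{cl}A$ there is a sequence in $A$ converging to $x$. A topological space $(X,\tau)$ is an accessibility space if for each $x_0\in X$ and every $H\subset X$ with $x_0\in\mathrm{cl}_\tau(H\setminus\{x_0\})$, there is a closed subset $F$ of $X$ with $x_0\in\mathrm{cl}_\tau(F\setminus\{x_0\})$ and $x_0\notin\mathrm{cl}_\tau(F\setminus H\setminus\{x_0\})$. *)

From Stdlib Require Import Classical.

Set Implicit Arguments.

Record topology (X : Type) : Type := Topology {
  is_open : (X -> Prop) -> Prop;
  open_full : is_open (fun _ => True);
  open_inter : forall U V, is_open U -> is_open V ->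
                 is_open (fun x => U x /\ V x);
  open_union : forall (F : (X -> Prop) -> Prop),
                 (forall U, F U -> is_open U) ->
                 is_open (fun x => exists U, F U /\ U x)
}.

Section TopDefs.
Variables (X : Type) (t : topology X).

Definition is_closed (F : X -> Prop) : Prop :=
  is_open t (fun x => ~ F x).

Definition in_closure (A : X -> Prop) (x : X) : Prop :=
  forall U, is_open t U -> U x -> exists y, U y /\ A y.

Definition converges (s : nat -> X) (x : X) : Prop :=
  forall U, is_open t U -> U x -> exists N, forall n, N <= n -> U (s n).

Definition frechet : Prop :=
  forall (A : X -> Prop) (x : X), in_closure A x ->
    exists s : nat -> X, (forall n, A (s n)) /\ converges s x.

Definition unique_seq_limits : Prop :=
  forall (s : nat -> X) (x y : X), converges s x -> converges s y -> x = y.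

Definition setminus1 (A : X -> Prop) (x0 : X) : X -> Prop :=
  fun x => A x /\ x <> x0.

Definition accessibility_space : Prop :=
  forall (x0 : X) (H : X -> Prop),
    in_closure (setminus1 H x0) x0 ->
    exists F : X -> Prop,
      is_closed F /\
      in_closure (setminus1 F x0) x0 /\
      ~ in_closure (setminus1 (fun x => F x /\ ~ H x) x0) x0.

End TopDefs.

From Stdlib Require Import Classical FunctionalExtensionality PropExtensionality Lia.

(* Pick a sequence s in H \ {x0} converging to x0 and take F = {x0} ∪ {s n}.
   Then F \ H \ {x0} is empty, while x0 is a limit of points of F \ {x0}.
   F is closed: uniqueness of sequential limits makes the space T1, so a point
   y outside F has neighbourhoods missing any finite initial segment of s.
   A sequence in {s n} converging to y (Fréchet) must therefore eventually
   use only late terms of s, so it also converges to x0, forcing y = x0. *)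

Section Accessibility.
Context {X : Type} {t : topology X}.

Lemma in_closure_of_converges (A : X -> Prop) (s : nat -> X) (x : X) :
  (forall n, A (s n)) -> converges t s x -> in_closure t A x.
Proof.
  intros HA Hs U HU Ux.
  destruct (Hs U HU Ux) as [N HN].
  exists (s N); auto.
Qed.

Lemma not_in_closure_empty (A : X -> Prop) (x : X) :
  (forall y, ~ A y) -> ~ in_closure t A x.
Proof.
  intros HA Hcl.
  destruct (Hcl _ (open_full t) I) as [y [_ Ay]].
  exact (HA y Ay).
Qed.

Lemma closed_of_open_nbhds (F : X -> Prop) :
  (forall y, ~ F y -> exists U, is_open t U /\ U y /\ forall z, U z -> ~ F z) ->
  is_closed t F.
Proof.
  intros HF.
  assert (Hcompl : (fun x => ~ F x) =
    (fun x => exists U, (is_open t U /\ forall z, U z -> ~ F z) /\ U x)).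
  { apply functional_extensionality; intro x;
      apply propositional_extensionality; split.
    - intros Fx. destruct (HF x Fx) as [U [HU [Ux HUF]]]. eauto.
    - intros [U [[_ HUF] Ux]]. auto. }
  unfold is_closed. rewrite Hcompl.
  apply open_union. intros U [HU _]. exact HU.
Qed.

Hypothesis Hunique : unique_seq_limits t.

(* If every neighbourhood of y contained x, the constant sequence x would
   converge to y as well as to x. *)
Lemma unique_seq_limits_T1 {x y : X} :
  x <> y -> exists U, is_open t U /\ U y /\ ~ U x.
Proof.
  intros Hxy. apply NNPP; intros Hno. apply Hxy.
  apply (Hunique (fun _ => x)).
  - intros U _ Ux. exists 0. auto.
  - intros U HU Uy. exists 0. intros n _.
    apply NNPP; intros Ux. apply Hno. eauto.
Qed.

Lemma in_closure_drop_point {A : X -> Prop} {x y : X} :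
  y <> x -> in_closure t (fun z => z = x \/ A z) y -> in_closure t A y.
Proof.
  intros Hyx Hcl U HU Uy.
  destruct (unique_seq_limits_T1 (not_eq_sym Hyx)) as [V [HV [Vy Vx]]].
  destruct (Hcl _ (open_inter _ _ _ HU HV) (conj Uy Vy)) as [z [[Uz Vz] [-> | Az]]].
  - contradiction.
  - eauto.
Qed.

Lemma open_nbhd_avoiding_prefix {s : nat -> X} {y : X} :
  (forall n, s n <> y) ->
  forall N, exists V, is_open t V /\ V y /\ forall n, n < N -> ~ V (s n).
Proof.
  intros Hsy N. induction N as [|N [V [HV [Vy HVs]]]].
  - exists (fun _ => True). split; [apply open_full|]. split; [exact I|]. lia.
  - destruct (unique_seq_limits_T1 (Hsy N)) as [W [HW [Wy Ws]]].
    exists (fun z => V z /\ W z).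
    split; [apply open_inter; assumption|]. split; [split; assumption|].
    intros n Hn [Vn Wn].
    destruct (PeanoNat.Nat.eq_dec n N) as [-> | HnN]; [contradiction|].
    apply (HVs n); [lia | assumption].
Qed.

Lemma converges_of_converges_in_range {s u : nat -> X} {x y : X} :
  (forall n, s n <> y) -> (forall k, exists n, u k = s n) ->
  converges t s x -> converges t u y -> converges t u x.
Proof.
  intros Hsy Hu Hs Huy U HU Ux.
  destruct (Hs U HU Ux) as [N HN].
  destruct (open_nbhd_avoiding_prefix Hsy N) as [V [HV [Vy HVs]]].
  destruct (Huy V HV Vy) as [K HK].
  exists K. intros k Hk.
  destruct (Hu k) as [n Hn]. rewrite Hn.
  apply HN. apply PeanoNat.Nat.nlt_ge. intros HnN.
  apply (HVs n HnN). rewrite <- Hn. auto.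
Qed.

Hypothesis Hfrechet : frechet t.

Lemma closed_range_with_limit {s : nat -> X} {x : X} :
  converges t s x -> is_closed t (fun z => z = x \/ exists n, s n = z).
Proof.
  intros Hs. apply closed_of_open_nbhds. intros y Hy.
  assert (Hyx : y <> x) by (intros ->; auto).
  assert (Hsy : forall n, s n <> y) by (intros n E; apply Hy; eauto).
  apply NNPP; intros Hno.
  assert (Hcl : in_closure t (fun z => z = x \/ exists n, s n = z) y).
  { intros U HU Uy. apply NNPP; intros Hmiss. apply Hno.
    exists U. repeat split; auto. intros z Uz Fz. eauto. }
  destruct (Hfrechet _ _ (in_closure_drop_point Hyx Hcl)) as [u [Hur Huy]].
  apply Hyx, (Hunique _ _ _ Huy).
  apply (converges_of_converges_in_range Hsy); [|exact Hs|exact Huy].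
  intros k. destruct (Hur k) as [n Hn]. eauto.
Qed.

End Accessibility.

Theorem proposition4p1 (X : Type) (t : topology X) :
  frechet t -> unique_seq_limits t -> accessibility_space t.
Proof.
  intros Hfrechet Hunique x0 H Hcl.
  destruct (Hfrechet _ _ Hcl) as [s [HsH Hs]].
  exists (fun z => z = x0 \/ exists n, s n = z).
  split; [|split].
  - exact (closed_range_with_limit Hunique Hfrechet Hs).
  - apply (in_closure_of_converges _ s _); [|exact Hs].
    intros n. destruct (HsH n) as [_ Hn]. split; eauto.
  - apply not_in_closure_empty.
    intros y [[[-> | [n <-]] HnotH] Hy0]; [auto|].
    apply HnotH, HsH.
Qed.
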